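(* Let $h:\Gamma\to\mathbb{T}A$ be a connected parametrized tropical curve without contracted edges, $\mathcal{Q}=\{p_1,\dots,p_x\}$ a lifting set, and $\tilde h:\widetilde\Gamma\to N_\mathbb{R}$ the lifted planar tropical curve, with paired unbounded ends $e_i,f_i$ of outgoing slopes $n_i,-n_i$ coming from $p_i$ and with $\gamma_i\in\Lambda$ the class of the loop associated to the pair $(e_i,f_i)$ (projection of a path in $\widetilde\Gamma$ from $e_i$ to $f_i$). Then every small deformation of $h$ (in the same combinatorial type) lifts to a small deformation of $\tilde h$. Conversely, a small deformation of $\tilde h$ (same combinatorial type, same slopes) descends to a deformation of $h:\Gamma\to\mathbb{T}A$ if and only if for every $i=1,\dots,x$ it satisfies $$\det(n_i,e_i)+\det(-n_i,f_i)=\det(n_i,S\gamma_i),$$ where $\det(n,e)$ denotes the moment $\det(n,z)$, $z\in\tilde h(e)$, of an unbounded end $e$ of slope $n$.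
   Context: $N$ is an oriented rank $2$ lattice, $N_\mathbb{R}=N\otimes\mathbb{R}$. A tropical torus is $\mathbb{T}A=N_\mathbb{R}/\Lambda$ with injective $S:\Lambda\to N_\mathbb{R}$ whose image is a full-rank lattice. A parametrized tropical curve $h:\Gamma\to\mathbb{T}A$ is a map from a compact connected finite metric graph, affine on edges with slopes in $N$, balanced at each vertex; an edge is contracted if its slope is $0$. A finite set $\mathcal{Q}$ of points in the interiors of edges of $\Gamma$ is lifting if $h_*:\pi_1(\Gamma\setminus\mathcal{Q})\to\pi_1(\mathbb{T}A)=\Lambda$ is trivial; the lift $\tilde h:\widetilde\Gamma\to N_\mathbb{R}$ is obtained by lifting $h|_{\Gamma\setminus\mathcal{Q}}$ to $N_\mathbb{R}$ and prolonging each cut half-edge to an unbounded ray of the same slope. A deformation is a continuous family of parametrized tropical curves of the same combinatorial type (same graph, same slopes, varying edge lengths and position). *)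

From HB Require Import structures.
From mathcomp Require Import all_boot all_order all_algebra.
From mathcomp Require Import all_classical all_reals all_analysis.
Set Implicit Arguments. Unset Strict Implicit. Unset Printing Implicit Defensive.
Import Order.TTheory GRing.Theory Num.Theory.
Local Open Scope ring_scope.
Local Open Scope classical_set_scope.
Import numFieldNormedType.Exports.

(*  N = Z^2 (oriented by the standard determinant), N_R = R^2 = R * R.  *)
(*  Lambda = Z^2, and S : Lambda -> N_R is given by the images S1, S2   *)
(*  of the standard basis; S injective with full-rank image  <=>        *)
(*  det(S1,S2) <> 0.                                                    *)
(*  A finite graph Gamma: vertex finType V, edge finType E, each edge   *)
(*  oriented from src e to tgt e (loops and multi-edges allowed).       *)

Definition vec (R : realType) := (R * R)%type.
Definition ivec := (int * int)%type.

Definition vadd {R : realType} (a b : vec R) : vec R := (a.1 + b.1, a.2 + b.2).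
Definition vopp {R : realType} (a : vec R) : vec R := (- a.1, - a.2).
Definition vsub {R : realType} (a b : vec R) : vec R := vadd a (vopp b).
Definition vscale {R : realType} (c : R) (a : vec R) : vec R := (c * a.1, c * a.2).
Definition vzero {R : realType} : vec R := (0, 0).

Definition ivR {R : realType} (n : ivec) : vec R := (n.1%:~R, n.2%:~R).
Definition iopp (n : ivec) : ivec := (- n.1, - n.2)%R.

Definition det2 {R : realType} (a b : vec R) : R := a.1 * b.2 - a.2 * b.1.

Definition Slat {R : realType} (S1 S2 : vec R) (g : ivec) : vec R :=
  vadd (vscale g.1%:~R S1) (vscale g.2%:~R S2).

Definition in_lattice {R : realType} (S1 S2 : vec R) (z : vec R) : Prop :=
  exists g : ivec, z = Slat S1 S2 g.

Definition torus_data {R : realType} (S1 S2 : vec R) : Prop := det2 S1 S2 != 0.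

(* balancing: at each vertex the sum of outgoing slopes vanishes; the
   outgoing slope of e is w e at src e and -(w e) at tgt e. *)
Definition balanced {V E : finType} (src tgt : E -> V) (w : E -> ivec) : Prop :=
  forall v : V,
    (\sum_(e | src e == v) (w e).1 - \sum_(e | tgt e == v) (w e).1 = 0)%R /\
    (\sum_(e | src e == v) (w e).2 - \sum_(e | tgt e == v) (w e).2 = 0)%R.

Definition no_contracted {E : finType} (w : E -> ivec) : Prop :=
  forall e, w e != (0, 0)%R.

Definition adj {V E : finType} (src tgt : E -> V) : rel V :=
  fun a b => [exists e, ((src e == a) && (tgt e == b)) || ((src e == b) && (tgt e == a))].
Definition graph_connected {V E : finType} (src tgt : E -> V) : Prop :=
  forall a b : V, connect (adj src tgt) a b.

(* A parametrized tropical curve h : Gamma -> TA with slopes w and edge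
   lengths l, represented by chosen lifts x v in N_R of the images of the
   vertices: edge e is mapped to t |-> [x (src e) + t w e], t in [0, l e],
   which must end at [x (tgt e)] in TA = N_R / S(Lambda). *)
Definition torus_curve {R : realType} {V E : finType} (S1 S2 : vec R)
    (src tgt : E -> V) (w : E -> ivec) (l : E -> R) (x : V -> vec R) : Prop :=
  (forall e, 0 < l e) /\
  (forall e, in_lattice S1 S2 (vsub (x (tgt e)) (vadd (x (src e)) (vscale (l e) (ivR (w e)))))) /\
  balanced src tgt w.

(* The lifted planar curve htilde : Gammatilde -> N_R for a set Q of cut
   edges (each edge of Q carries exactly one point of the lifting set).
   Gammatilde has vertex set V, bounded edges the e \notin Q (with the
   same slopes), and for each e \in Q two unbounded ends: e_i at src e of
   outgoing slope w e and f_i at tgt e of outgoing slope -(w e). *)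
Definition planar_curve {R : realType} {V E : finType}
    (src tgt : E -> V) (Q : {set E}) (w : E -> ivec) (lt : E -> R) (y : V -> vec R) : Prop :=
  forall e, e \notin Q -> 0 < lt e /\ y (tgt e) = vadd (y (src e)) (vscale (lt e) (ivR (w e))).

Definition is_lift {R : realType} {V E : finType} (S1 S2 : vec R)
    (src tgt : E -> V) (Q : {set E}) (w : E -> ivec) (l : E -> R)
    (x : V -> vec R) (lt : E -> R) (y : V -> vec R) : Prop :=
  (forall v, in_lattice S1 S2 (vsub (y v) (x v))) /\
  (forall e, e \notin Q -> lt e = l e) /\
  planar_curve src tgt Q w lt y.

(* Q is a lifting set: h_* is trivial on pi_1(Gamma \ Q), i.e. (covering
   theory) h restricted to Gamma \ Q lifts to N_R. *)
Definition lifting_set {R : realType} {V E : finType} (S1 S2 : vec R)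
    (src tgt : E -> V) (Q : {set E}) (w : E -> ivec) (l : E -> R) (x : V -> vec R) : Prop :=
  exists y : V -> vec R, is_lift S1 S2 src tgt Q w l x l y.

(* walks in Gammatilde (through bounded edges, i.e. edges not in Q);
   an oriented edge (e, true) is traversed from src e to tgt e,
   (e, false) from tgt e to src e. *)
Definition ostart {V E : Type} (src tgt : E -> V) (o : E * bool) : V :=
  if o.2 then src o.1 else tgt o.1.
Definition oend {V E : Type} (src tgt : E -> V) (o : E * bool) : V :=
  if o.2 then tgt o.1 else src o.1.

Fixpoint walk_in {V E : finType} (src tgt : E -> V) (Q : {set E})
    (a : V) (s : seq (E * bool)) (b : V) : Prop :=
  match s with
  | [::] => a = b
  | o :: s' => o.1 \notin Q /\ ostart src tgt o = a /\ walk_in src tgt Q (oend src tgt o) s' b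
  end.

Definition walk_disp {R : realType} {E : Type} (w : E -> ivec) (l : E -> R)
    (s : seq (E * bool)) : vec R :=
  foldr (fun o acc => vadd (if o.2 then vscale (l o.1) (ivR (w o.1))
                                   else vopp (vscale (l o.1) (ivR (w o.1)))) acc) vzero s.

Definition cont_on {R : realType} (d : R) (f : R -> R) : Prop :=
  {within `[0, d], continuous f}.
Definition vcont_on {R : realType} (d : R) (f : R -> vec R) : Prop :=
  cont_on d (fun t => (f t).1) /\ cont_on d (fun t => (f t).2).

(* A deformation of h (same combinatorial type: same graph, same slopes,
   varying lengths and positions) over the parameter interval [0, d],
   starting at h.  (A continuous path in TA lifts to N_R, so the vertex
   images are represented by continuous lifts starting at x.) *)
Definition torus_deformation {R : realType} {V E : finType} (S1 S2 : vec R)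
    (src tgt : E -> V) (w : E -> ivec) (l : E -> R) (x : V -> vec R) (d : R)
    (L : R -> E -> R) (X : R -> V -> vec R) : Prop :=
  L 0 = l /\ X 0 = x /\
  (forall e, cont_on d (fun t => L t e)) /\ (forall v, vcont_on d (fun t => X t v)) /\
  (forall t, 0 <= t <= d -> torus_curve S1 S2 src tgt w (L t) (X t)).

Definition planar_deformation {R : realType} {V E : finType}
    (src tgt : E -> V) (Q : {set E}) (w : E -> ivec) (lt : E -> R) (y : V -> vec R) (d : R)
    (Lt : R -> E -> R) (Y : R -> V -> vec R) : Prop :=
  (forall e, e \notin Q -> Lt 0 e = lt e) /\ Y 0 = y /\
  (forall e, e \notin Q -> cont_on d (fun t => Lt t e)) /\
  (forall v, vcont_on d (fun t => Y t v)) /\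
  (forall t, 0 <= t <= d -> planar_curve src tgt Q w (Lt t) (Y t)).

(* Record an edge [e] of a curve with vertex lifts [X] and edge lengths [L] by its defect
   [X (tgt e) - X (src e) - L e * w e].  The curve closes up in the torus iff all defects lie in
   [S(Lambda)], and a lift is planar iff the defects of the uncut edges vanish.  Along a deformation
   each defect is a continuous [S(Lambda)]-valued function, hence constant.  So shifting a deformation
   of [h] by the fixed vectors [y - x] keeps the uncut defects zero, and a deformation of [htilde]
   descends exactly when the defects of the cut edges can be held at their initial values by changing
   their lengths, i.e. when each of them moves parallel to [w e].  As
   [det(w e, Y (src e)) + det(- w e, Y (tgt e)) = - det(w e, defect)] and [S gamma_e] is minus the
   initial defect of [e], this parallelism is the moment condition; the corrected lengths stay
   positive for small times by continuity. *)

From HB Require Import structures.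
From mathcomp Require Import all_boot all_order all_algebra.
From mathcomp Require Import all_classical all_reals all_analysis.
From mathcomp Require Import zify ring lra.
Import Order.TTheory GRing.Theory Num.Theory.
Local Open Scope ring_scope.
Local Open Scope classical_set_scope.
Import numFieldNormedType.Exports.

Set Implicit Arguments.
Unset Strict Implicit.

Ltac vsimpl := rewrite /vsub /vadd /vopp /vscale /vzero /ivR /iopp /det2 /Slat /=.

Section Plane.
Variables (R : realType) (S1 S2 : vec R).
Implicit Types (a b c z : vec R).

Definition vdot a b : R := a.1 * b.1 + a.2 * b.2.

Lemma vadd_subK a b : vadd a (vsub b a) = b.
Proof. by apply: injective_projections; vsimpl; ring. Qed.

Lemma det2N a b : det2 a (vopp b) = - det2 a b.
Proof. by vsimpl; ring. Qed.

Lemma det2B a b c : det2 a (vsub b c) = det2 a b - det2 a c.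
Proof. by vsimpl; ring. Qed.

Lemma vdot_ivR_neq0 (n : ivec) : n != (0, 0) -> vdot (ivR n) (ivR n) != 0.
Proof.
case: n => n1 n2 nz; rewrite /vdot /= -!expr2 paddr_eq0 ?sqr_ge0 // !sqrf_eq0 !intr_eq0.
by apply: contra nz => /andP[/eqP-> /eqP->].
Qed.

Lemma det2_eq0_colinear a b : vdot a a != 0 -> det2 a b = 0 ->
  b = vscale (vdot a b / vdot a a) a.
Proof.
move=> aa0 ab0; apply: injective_projections; apply: (mulIf aa0); rewrite /= mulrAC divfK //.
- by rewrite -[RHS]subr0 -(mulr0 a.2) -ab0 /vdot /det2; ring.
- by rewrite -[RHS]addr0 -(mulr0 a.1) -ab0 /vdot /det2; ring.
Qed.

Lemma in_latticeD a b :
  in_lattice S1 S2 a -> in_lattice S1 S2 b -> in_lattice S1 S2 (vadd a b).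
Proof.
move=> [ga ->] [gb ->]; exists (ga.1 + gb.1, ga.2 + gb.2).
apply: injective_projections; vsimpl; rewrite !intrD; ring.
Qed.

Lemma in_latticeN a : in_lattice S1 S2 a -> in_lattice S1 S2 (vopp a).
Proof.
move=> [ga ->]; exists (- ga.1, - ga.2).
apply: injective_projections; vsimpl; rewrite !intrN; ring.
Qed.

Lemma det2_Slatl g : det2 (Slat S1 S2 g) S2 = g.1%:~R * det2 S1 S2.
Proof. by vsimpl; ring. Qed.

Lemma det2_Slatr g : det2 S1 (Slat S1 S2 g) = g.2%:~R * det2 S1 S2.
Proof. by vsimpl; ring. Qed.

Lemma Cramer_decomposition z : torus_data S1 S2 ->
  z = vadd (vscale (det2 z S2 / det2 S1 S2) S1) (vscale (det2 S1 z / det2 S1 S2) S2).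
Proof. by move=> hS; apply: injective_projections; vsimpl; field; exact: hS. Qed.

End Plane.

Section Continuity.
Variable R : realType.
Implicit Types (d c : R) (f g : R -> R) (F G : R -> vec R).

Lemma cont_onW d d' f : d' <= d -> cont_on d f -> cont_on d' f.
Proof.
move=> d'd; apply: continuous_subspaceW => t /=; rewrite !in_itv /= => /andP[-> td'].
exact: le_trans td' d'd.
Qed.

Lemma cont_on_cst d c : cont_on d (fun=> c).
Proof. by move=> t; apply: cst_continuous. Qed.

Lemma cont_onD d f g : cont_on d f -> cont_on d g -> cont_on d (fun t => f t + g t).
Proof. by move=> hf hg t; exact: continuousD (hf t) (hg t). Qed.

Lemma cont_onN d f : cont_on d f -> cont_on d (fun t => - f t).
Proof. by move=> hf t; exact: continuousN (hf t). Qed.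

Lemma cont_onM d f g : cont_on d f -> cont_on d g -> cont_on d (fun t => f t * g t).
Proof. by move=> hf hg t; exact: continuousM (hf t) (hg t). Qed.

Lemma cont_onMr d f c : cont_on d f -> cont_on d (fun t => f t * c).
Proof. by move=> hf; apply: cont_onM hf _; exact: cont_on_cst. Qed.

Lemma vcont_onW d d' F : d' <= d -> vcont_on d F -> vcont_on d' F.
Proof. by move=> d'd [h1 h2]; split; exact: cont_onW d'd _. Qed.

Lemma vcont_on_cst d (a : vec R) : vcont_on d (fun=> a).
Proof. by split; exact: cont_on_cst. Qed.

Lemma vcont_onD d F G : vcont_on d F -> vcont_on d G -> vcont_on d (fun t => vadd (F t) (G t)).
Proof. by move=> [f1 f2] [g1 g2]; split; exact: cont_onD. Qed.

Lemma vcont_onN d F : vcont_on d F -> vcont_on d (fun t => vopp (F t)).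
Proof. by move=> [f1 f2]; split; exact: cont_onN. Qed.

Lemma vcont_onZ d f (a : vec R) : cont_on d f -> vcont_on d (fun t => vscale (f t) a).
Proof. by move=> hf; split; exact: cont_onMr. Qed.

Lemma cont_on_det2 d F G : vcont_on d F -> vcont_on d G -> cont_on d (fun t => det2 (F t) (G t)).
Proof.
by move=> [f1 f2] [g1 g2]; apply: cont_onD; [|apply: cont_onN]; exact: cont_onM.
Qed.

Lemma cont_on_vdot d F G : vcont_on d F -> vcont_on d G -> cont_on d (fun t => vdot (F t) (G t)).
Proof. by move=> [f1 f2] [g1 g2]; apply: cont_onD; exact: cont_onM. Qed.

Lemma intr_neq_addhalf (m z : int) : (m%:~R : R) != z%:~R + 1 / 2.
Proof.
apply/eqP => /(congr1 (fun r => r - z%:~R)); rewrite addrAC subrr add0r -intrB.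
move=> half; have : 0 < ((m - z)%:~R : R) < 1 by rewrite half; apply/andP; split; lra.
by rewrite ltr0z ltrz1; lia.
Qed.

(* Otherwise the intermediate value theorem produces a half-integer value. *)
Lemma cont_on_int_const d f : cont_on d f ->
    (forall t, 0 <= t <= d -> exists z : int, f t = z%:~R) ->
  forall t, 0 <= t <= d -> f t = f 0.
Proof.
move=> hf hint t /andP[t0 td].
have d0 : 0 <= d by exact: le_trans td.
have [z0 fz0] := hint 0 ltac:(by rewrite lexx d0).
have [zt fzt] := hint t ltac:(by rewrite t0 td).
have [//|neq] := eqVneq zt z0; first by rewrite fzt fz0 => ->.
have [lo [hi [lohi [flo fhi]]]] : exists lo hi : int,
    lo < hi /\ Num.min (f 0) (f t) = lo%:~R /\ Num.max (f 0) (f t) = hi%:~R.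
  rewrite fz0 fzt; case: (ltgtP zt z0) neq => // h _.
  - by exists zt, z0; rewrite min_r ?max_l // ler_int ltW.
  - by exists z0, zt; rewrite min_l ?max_r // ler_int ltW.
have hmid : Num.min (f 0) (f t) <= lo%:~R + 1 / 2 <= Num.max (f 0) (f t).
  have : lo + 1 <= hi by lia.
  rewrite flo fhi -(ler_int R) intrD => hle; apply/andP; split; lra.
have [c] := IVT t0 (cont_onW td hf) hmid.
rewrite in_itv /= => /andP[c0 ct] fc.
have [zc fzc] := hint c ltac:(by rewrite c0 (le_trans ct td)).
by move: (intr_neq_addhalf zc lo); rewrite -fzc fc eqxx.
Qed.

Lemma cont_on_pos_near0 (I : finType) d (f : I -> R -> R) : 0 < d ->
    (forall i, cont_on d (f i)) -> (forall i, 0 < f i 0) ->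
  exists2 d', 0 < d' <= d & forall i t, 0 <= t <= d' -> 0 < f i t.
Proof.
move=> d0 fc f0.
have near_pos i : \forall t \near (0 : R), 0 <= t <= d -> 0 < f i t.
  have : nbhs_subspace (A := `[0, d]) 0 (fun t => 0 < f i t).
    exact: cvgr_gt (fc i 0) _ (f0 i).
  by rewrite -nbhs_subspace_in //= in_itv /= lexx ltW.
have /nbhs_ballP[e /= e0 pos_e] := filter_forall (nbhs_filter 0) near_pos.
exists (Num.min d (e / 2)); first by rewrite lt_min d0 divr_gt0 //= ge_min lexx.
move=> i t /andP[t0]; rewrite le_min => /andP[td te].
apply: (pos_e t) => //; last by rewrite t0 td.
by rewrite /ball /= sub0r normrN ger0_norm //; lra.
Qed.

Variables S1 S2 : vec R.

Lemma lattice_valued_const d (f : R -> vec R) : torus_data S1 S2 -> vcont_on d f ->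
    (forall t, 0 <= t <= d -> in_lattice S1 S2 (f t)) ->
  forall t, 0 <= t <= d -> f t = f 0.
Proof.
move=> hS fc flat t ht.
have coord1 : forall s, 0 <= s <= d -> det2 (f s) S2 / det2 S1 S2 = det2 (f 0) S2 / det2 S1 S2.
  apply: cont_on_int_const.
    by apply: cont_onMr; apply: cont_on_det2 fc _; exact: vcont_on_cst.
  by move=> s /flat[g ->]; exists g.1; rewrite det2_Slatl mulfK.
have coord2 : forall s, 0 <= s <= d -> det2 S1 (f s) / det2 S1 S2 = det2 S1 (f 0) / det2 S1 S2.
  apply: cont_on_int_const.
    by apply: cont_onMr; apply: cont_on_det2 _ fc; exact: vcont_on_cst.
  by move=> s /flat[g ->]; exists g.2; rewrite det2_Slatr mulfK.
by rewrite (Cramer_decomposition (f t) hS) (Cramer_decomposition (f 0) hS) coord1 ?coord2.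
Qed.

End Continuity.

Section TropicalCurves.
Variables (R : realType) (S1 S2 : vec R) (V E : finType) (src tgt : E -> V) (w : E -> ivec).
Implicit Types (X Y x y : V -> vec R) (e : E) (le : R).

Definition edge_defect X e le : vec R :=
  vsub (X (tgt e)) (vadd (X (src e)) (vscale le (ivR (w e)))).

Lemma edge_defect_eq0 {X e le} :
  X (tgt e) = vadd (X (src e)) (vscale le (ivR (w e))) <-> edge_defect X e le = vzero.
Proof.
rewrite /edge_defect; split=> [->|]; first by apply: injective_projections; vsimpl; ring.
by vsimpl; case=> h1 h2; apply: injective_projections => /=; lra.
Qed.

Lemma edge_defect_lengthD X e le m :
  edge_defect X e (le + m) = vsub (edge_defect X e le) (vscale m (ivR (w e))).
Proof. by apply: injective_projections; rewrite /edge_defect; vsimpl; ring. Qed.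

Lemma edge_defect_shift X Y e le :
  edge_defect Y e le =
  vadd (edge_defect X e le) (vsub (vsub (Y (tgt e)) (X (tgt e))) (vsub (Y (src e)) (X (src e)))).
Proof. by apply: injective_projections; rewrite /edge_defect; vsimpl; ring. Qed.

Lemma edge_defect_transport {X x y e Le le} :
  edge_defect X e Le = edge_defect x e le ->
  edge_defect (fun v => vadd (X v) (vsub (y v) (x v))) e Le = edge_defect y e le.
Proof.
by rewrite /edge_defect; vsimpl; case=> h1 h2; apply: injective_projections => /=; lra.
Qed.

Lemma vcont_on_edge_defect d (X : R -> V -> vec R) (Le : R -> R) e :
    (forall v, vcont_on d (X^~ v)) -> cont_on d Le ->
  vcont_on d (fun t => edge_defect (X t) e (Le t)).
Proof.
move=> Xc Lc; apply: vcont_onD (Xc _) _; apply: vcont_onN; apply: vcont_onD (Xc _) _.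
exact: vcont_onZ.
Qed.

Lemma edge_defect_rigid d (X : R -> V -> vec R) (Le : R -> R) e :
    torus_data S1 S2 -> (forall v, vcont_on d (X^~ v)) -> cont_on d Le ->
    (forall t, 0 <= t <= d -> in_lattice S1 S2 (edge_defect (X t) e (Le t))) ->
  forall t, 0 <= t <= d -> edge_defect (X t) e (Le t) = edge_defect (X 0) e (Le 0).
Proof.
move=> hS Xc Lc; apply: (lattice_valued_const (f := fun t => edge_defect (X t) e (Le t))) => //.
exact: vcont_on_edge_defect.
Qed.

Lemma walk_disp_planar Q lt y a s b : planar_curve src tgt Q w lt y ->
  walk_in src tgt Q a s b -> walk_disp w lt s = vsub (y b) (y a).
Proof.
move=> hy; elim: s a => [|o s IH] a /=.
  by move=> ->; apply: injective_projections; vsimpl; ring.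
move=> [oQ [<- /IH ->]]; have [_ yo] := hy _ oQ.
by rewrite /ostart /oend; case: o.2; rewrite yo; apply: injective_projections; vsimpl; ring.
Qed.

Lemma moment_edge_defect Y e le :
  det2 (ivR (w e)) (Y (src e)) + det2 (ivR (iopp (w e))) (Y (tgt e)) =
  - det2 (ivR (w e)) (edge_defect Y e le).
Proof. by rewrite /edge_defect; vsimpl; rewrite !intrN; ring. Qed.

(* The loop crosses [e] and returns through [Gammatilde], where all defects vanish. *)
Lemma Slat_loop_defect Q l y e s g : planar_curve src tgt Q w l y ->
    walk_in src tgt Q (tgt e) s (src e) ->
    Slat S1 S2 g = vadd (vscale (l e) (ivR (w e))) (walk_disp w l s) ->
  Slat S1 S2 g = vopp (edge_defect y e (l e)).
Proof.
move=> hy /(walk_disp_planar hy) -> ->.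
by apply: injective_projections; rewrite /edge_defect; vsimpl; ring.
Qed.

Variables (Q : {set E}) (l : E -> R) (x y : V -> vec R).
Hypothesis hS : torus_data S1 S2.
Hypothesis hx : torus_curve S1 S2 src tgt w l x.
Hypothesis hy : is_lift S1 S2 src tgt Q w l x l y.

Lemma torus_deformation_lift d (L : R -> E -> R) (X : R -> V -> vec R) :
    torus_deformation S1 S2 src tgt w l x d L X ->
  exists (Lt : R -> E -> R) (Y : R -> V -> vec R),
    planar_deformation src tgt Q w l y d Lt Y /\
    forall t, 0 <= t <= d -> is_lift S1 S2 src tgt Q w (L t) (X t) (Lt t) (Y t).
Proof.
move=> [L0 [X0 [Lc [Xc Xcurve]]]]; have [ylat [_ yplanar]] := hy.
pose Y t v := vadd (X t v) (vsub (y v) (x v)).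
have defectY t e : 0 <= t <= d -> edge_defect (Y t) e (L t e) = edge_defect y e (l e).
  move=> ht; apply: edge_defect_transport; rewrite -X0 -L0.
  by apply: (edge_defect_rigid (Le := L^~ e) hS) => // s /Xcurve[_ [Xlat _]]; exact: Xlat.
have Yplanar t : 0 <= t <= d -> planar_curve src tgt Q w (L t) (Y t).
  move=> ht e eQ; have [Lpos _] := Xcurve t ht; split; first exact: Lpos.
  by apply/edge_defect_eq0; rewrite defectY //; apply/edge_defect_eq0; case: (yplanar e eQ).
exists L, Y; split.
- split; first by move=> e _; rewrite L0.
  split; first by apply: funext => v; rewrite /Y X0 vadd_subK.
  split; first by move=> e _; exact: Lc.
  split; last exact: Yplanar.
  by move=> v; apply: vcont_onD (Xc v) _; exact: vcont_on_cst.
- move=> t ht; split; last by split; [|exact: Yplanar].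
  move=> v; suff -> : vsub (Y t v) (X t v) = vsub (y v) (x v) by exact: ylat.
  by apply: injective_projections; vsimpl; ring.
Qed.

Variables (P : E -> seq (E * bool)) (gamma : E -> ivec).
Hypothesis hP : forall e, e \in Q -> walk_in src tgt Q (tgt e) (P e) (src e).
Hypothesis hgamma : forall e, e \in Q ->
  Slat S1 S2 (gamma e) = vadd (vscale (l e) (ivR (w e))) (walk_disp w l (P e)).

Definition moment_condition Y e : Prop :=
  det2 (ivR (w e)) (Y (src e)) + det2 (ivR (iopp (w e))) (Y (tgt e)) =
  det2 (ivR (w e)) (Slat S1 S2 (gamma e)).

Lemma moment_conditionE Y e le : e \in Q ->
  moment_condition Y e <->
  det2 (ivR (w e)) (edge_defect Y e le) = det2 (ivR (w e)) (edge_defect y e (l e)).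
Proof.
move=> eQ; have [_ [_ yplanar]] := hy.
rewrite /moment_condition (moment_edge_defect _ _ le).
rewrite (Slat_loop_defect yplanar (hP eQ) (hgamma eQ)).
by rewrite det2N; split=> [/oppr_inj|->].
Qed.

Lemma descent_moment_condition d d' (Lt L : R -> E -> R) (Y X : R -> V -> vec R) :
    d' <= d ->
    planar_deformation src tgt Q w l y d Lt Y ->
    torus_deformation S1 S2 src tgt w l x d' L X ->
    (forall t, 0 <= t <= d' -> is_lift S1 S2 src tgt Q w (L t) (X t) (Lt t) (Y t)) ->
  forall t, 0 <= t <= d' -> forall e, e \in Q -> moment_condition (Y t) e.
Proof.
move=> d'd [_ [Y0 [_ [Yc _]]]] [L0 [_ [Lc [_ Xcurve]]]] lift t ht e eQ.
apply/(moment_conditionE _ (L t e) eQ); congr det2; rewrite -Y0 -L0.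
apply: (edge_defect_rigid (d := d') (Le := L^~ e) hS) => // [v|s hs];
  first exact: vcont_onW d'd (Yc v).
have [XYlat _] := lift s hs; have [_ [Xlat _]] := Xcurve s hs.
rewrite (edge_defect_shift (X s)).
by apply: in_latticeD (Xlat e) _; apply: in_latticeD (XYlat _) _; apply: in_latticeN.
Qed.

Hypothesis hw : no_contracted w.

(* Coefficient of the change of defect along [w e]; under the moment condition it is the whole
   change. *)
Definition length_correction Y e : R :=
  vdot (ivR (w e)) (vsub (edge_defect Y e (l e)) (edge_defect y e (l e))) /
  vdot (ivR (w e)) (ivR (w e)).

Lemma length_correction_lift e : length_correction y e = 0.
Proof. by rewrite /length_correction /vdot; vsimpl; rewrite !subrr !mulr0 addr0 mul0r. Qed.

Lemma edge_defect_corrected Y e : e \in Q -> moment_condition Y e ->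
  edge_defect Y e (l e + length_correction Y e) = edge_defect y e (l e).
Proof.
move=> eQ /(moment_conditionE _ (l e) eQ) hdet.
have /(det2_eq0_colinear (vdot_ivR_neq0 R (hw e))) par :
    det2 (ivR (w e)) (vsub (edge_defect Y e (l e)) (edge_defect y e (l e))) = 0.
  by rewrite det2B hdet subrr.
rewrite edge_defect_lengthD /length_correction -par.
by apply: injective_projections; vsimpl; ring.
Qed.

Lemma vcont_on_length_correction d (Y : R -> V -> vec R) e :
  (forall v, vcont_on d (Y^~ v)) -> cont_on d (fun t => length_correction (Y t) e).
Proof.
move=> Yc; apply: cont_onMr; apply: cont_on_vdot; first exact: vcont_on_cst.
apply: vcont_onD; first by apply: vcont_on_edge_defect Yc _; exact: cont_on_cst.
by apply: vcont_onN; exact: vcont_on_cst.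
Qed.

Lemma moment_condition_descent d (Lt : R -> E -> R) (Y : R -> V -> vec R) :
    planar_deformation src tgt Q w l y d Lt Y ->
    (exists d1, 0 < d1 <= d /\
       forall t, 0 <= t <= d1 -> forall e, e \in Q -> moment_condition (Y t) e) ->
  exists d', 0 < d' <= d /\
    exists (L : R -> E -> R) (X : R -> V -> vec R),
      torus_deformation S1 S2 src tgt w l x d' L X /\
      forall t, 0 <= t <= d' -> is_lift S1 S2 src tgt Q w (L t) (X t) (Lt t) (Y t).
Proof.
move=> [Lt0 [Y0 [Ltc [Yc Ycurve]]]] [d1 [/andP[d10 d1d] moment]].
have [ylat [_ yplanar]] := hy; have [lpos [xlat xbal]] := hx.
pose L t e := if e \in Q then l e + length_correction (Y t) e else Lt t e.
pose X t v := vadd (Y t v) (vsub (x v) (y v)).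
have L0 : L 0 = l.
  apply: funext => e; rewrite /L Y0 length_correction_lift addr0.
  by case: ifPn => // eQ; exact: Lt0.
have Lc e : cont_on d (L^~ e).
  rewrite /L; case: (boolP (e \in Q)) => eQ; last exact: Ltc.
  by apply: cont_onD; [exact: cont_on_cst | exact: vcont_on_length_correction].
have [d' /andP[d'0 d'd1] Lpos] :
    exists2 d', 0 < d' <= d1 & forall e t, 0 <= t <= d' -> 0 < L t e.
  apply: cont_on_pos_near0 => // e; last by rewrite L0.
  exact: cont_onW d1d (Lc e).
have d'd : d' <= d by exact: le_trans d1d.
have defectY t e : 0 <= t <= d' -> edge_defect (Y t) e (L t e) = edge_defect y e (l e).
  move=> /andP[t0 td']; rewrite /L; case: ifPn => eQ.
    by apply: edge_defect_corrected => //; apply: moment => //; rewrite t0 (le_trans td').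
  have htd : 0 <= t <= d by rewrite t0 (le_trans td').
  have [_ /edge_defect_eq0 ->] := Ycurve t htd e eQ.
  by have [_ /edge_defect_eq0 ->] := yplanar e eQ.
exists d'; split; first by rewrite d'0.
exists L, X; split.
- split; first exact: L0.
  split; first by apply: funext => v; rewrite /X Y0 vadd_subK.
  split; first by move=> e; exact: cont_onW d'd (Lc e).
  split.
    by move=> v; apply: vcont_onD (vcont_onW d'd (Yc v)) _; exact: vcont_on_cst.
  move=> t ht; split; first by move=> e; exact: Lpos.
  split=> // e; change (in_lattice S1 S2 (edge_defect (X t) e (L t e))).
  by rewrite (edge_defect_transport (defectY t e ht)); exact: xlat.
- move=> t /andP[t0 td']; split.
    move=> v; suff -> : vsub (Y t v) (X t v) = vsub (y v) (x v) by exact: ylat.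
    by apply: injective_projections; vsimpl; ring.
  split; first by move=> e eQ; rewrite /L (negbTE eQ).
  by apply: Ycurve; rewrite t0 (le_trans td').
Qed.

End TropicalCurves.

Theorem mainTheorem4 (R : realType) (S1 S2 : vec R) (V E : finType)
    (src tgt : E -> V) (w : E -> ivec) (l : E -> R) (x : V -> vec R)
    (Q : {set E}) (y : V -> vec R)
    (P : E -> seq (E * bool)) (gamma : E -> ivec) :
  torus_data S1 S2 ->
  torus_curve S1 S2 src tgt w l x ->
  graph_connected src tgt ->
  no_contracted w ->
  lifting_set S1 S2 src tgt Q w l x ->
  is_lift S1 S2 src tgt Q w l x l y ->
  (* [P e] leads through [Gammatilde] from [f_e] back to [e_e]; [gamma e] is the class of the loop
     it closes across the cut point on [e]. *)
  (forall e, e \in Q -> walk_in src tgt Q (tgt e) (P e) (src e)) ->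
  (forall e, e \in Q ->
     Slat S1 S2 (gamma e) = vadd (vscale (l e) (ivR (w e))) (walk_disp w l (P e))) ->
  (forall (d : R) (L : R -> E -> R) (X : R -> V -> vec R), 0 < d ->
     torus_deformation S1 S2 src tgt w l x d L X ->
     exists d' : R, 0 < d' <= d /\
       exists (Lt : R -> E -> R) (Y : R -> V -> vec R),
         planar_deformation src tgt Q w l y d' Lt Y /\
         forall t, 0 <= t <= d' -> is_lift S1 S2 src tgt Q w (L t) (X t) (Lt t) (Y t)) /\
  (forall (d : R) (Lt : R -> E -> R) (Y : R -> V -> vec R), 0 < d ->
     planar_deformation src tgt Q w l y d Lt Y ->
     ((exists d' : R, 0 < d' <= d /\
        exists (L : R -> E -> R) (X : R -> V -> vec R),
          torus_deformation S1 S2 src tgt w l x d' L X /\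
          forall t, 0 <= t <= d' -> is_lift S1 S2 src tgt Q w (L t) (X t) (Lt t) (Y t))
      <->
      (exists d' : R, 0 < d' <= d /\
        forall t, 0 <= t <= d' -> forall e, e \in Q ->
          det2 (ivR (w e)) (Y t (src e)) + det2 (ivR (iopp (w e))) (Y t (tgt e))
          = det2 (ivR (w e)) (Slat S1 S2 (gamma e))))).
Proof.
move=> hS hx _ hw _ hy hP hgamma; split.
- move=> d L X d0 hX; exists d; split; first by rewrite d0 lexx.
  exact: (torus_deformation_lift hS hy hX).
- move=> d Lt Y d0 hY; split.
  + move=> [d' [/andP[d'0 d'd] [L [X [hX lift]]]]].
    exists d'; split; first by rewrite d'0 d'd.
    exact: (descent_moment_condition hS hy hP hgamma d'd hY hX lift).
  + exact: (moment_condition_descent hx hy hP hgamma hw hY).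
Qed.
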